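(* Let $G$ be a $\mathbb{Z}$-graded commutative ring with $G_i=0$ for all $i>0$, and let $H$ be a graded $G$-module such that $H_i$ is an artinian $G_0$-module for all $i\gg0$. Let $X:H\to H$ be a homogeneous $G$-linear map of negative degree. If $\ker(X)$ is almost artinian as a $G$-module, then $H$ is almost artinian as a $G[X]$-module (where the polynomial variable $X$ acts on $H$ via the map $X$).
   Context: For a graded $G$-module $H$ and an integer $r$, $H_{<r}=\bigoplus_{i<r}H_i$ is a graded $G$-submodule and $H_{\ge r}:=H/H_{<r}$. A graded module $H$ over such a ring is almost artinian if there is an integer $r$ such that $H_{\ge r}$ is artinian as a module over that ring. *)

From HB Require Import structures.
From mathcomp Require Import all_boot all_order all_algebra.
Set Implicit Arguments. Unset Strict Implicit. Unset Printing Implicit Defensive.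
Import Order.TTheory GRing.Theory Num.Theory.
Local Open Scope ring_scope.

Definition add_subgroup (V : zmodType) (S : V -> Prop) : Prop :=
  S 0 /\ (forall x y, S x -> S y -> S (x - y)).

Definition int_direct_sum (V : zmodType) (Vd : int -> V -> Prop) : Prop :=
  (forall x : V, exists (s : seq int) (f : int -> V),
      [/\ uniq s, (forall i, Vd i (f i)) & x = \sum_(i <- s) f i]) /\
  (forall (s : seq int) (f : int -> V), uniq s -> (forall i, Vd i (f i)) ->
      \sum_(i <- s) f i = 0 -> forall i, i \in s -> f i = 0).

Definition graded_ring (R : comPzRingType) (Rd : int -> R -> Prop) : Prop :=
  [/\ forall i, add_subgroup (Rd i),
      forall i j a b, Rd i a -> Rd j b -> Rd (i + j) (a * b)
    & int_direct_sum Rd].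

Definition graded_module (R : comPzRingType) (Rd : int -> R -> Prop)
    (M : lmodType R) (Md : int -> M -> Prop) : Prop :=
  [/\ forall i, add_subgroup (Md i),
      forall i j a x, Rd i a -> Md j x -> Md (i + j) (a *: x)
    & int_direct_sum Md].

Definition submod (R : comPzRingType) (M : lmodType R) (S : R -> Prop)
    (L : M -> Prop) : Prop :=
  [/\ L 0, (forall x y, L x -> L y -> L (x + y))
    & forall a x, S a -> L x -> L (a *: x)].

Definition Gsubmod (R : comPzRingType) (M : lmodType R) (L : M -> Prop) : Prop :=
  submod (fun _ : R => True) L.

(* G[X]-submodule, X acting through the map X : G-submodule stable under X. *)
Definition GXsubmod (R : comPzRingType) (M : lmodType R) (X : M -> M)
    (L : M -> Prop) : Prop :=
  Gsubmod L /\ (forall x, L x -> L (X x)).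

(* The subquotient module Mtop / Nbot (Nbot a submodule of Mtop) is artinian
   for the class of submodules P: descending chain condition on the submodules
   of Mtop/Nbot, i.e. (lattice correspondence) on the P-submodules L with
   Nbot <= L <= Mtop. *)
Definition artinian_subquot (M : Type) (P : (M -> Prop) -> Prop)
    (Nbot Mtop : M -> Prop) : Prop :=
  forall L : nat -> M -> Prop,
    (forall n, [/\ P (L n), (forall x, Nbot x -> L n x)
                 & (forall x, L n x -> Mtop x)]) ->
    (forall n x, L n.+1 x -> L n x) ->
    exists n, forall m, (n <= m)%N -> forall x, L m x <-> L n x.

Definition lt_part (V : zmodType) (Vd : int -> V -> Prop) (r : int) (x : V)
    : Prop :=
  exists (s : seq int) (f : int -> V),
    [/\ all (fun i => i < r) s, (forall i, Vd i (f i)) & x = \sum_(i <- s) f i].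

(* A graded module (grading Md, underlying set Mtop) is almost artinian
   (for the submodule class P) if some H_{>= r} = H / H_{<r} is artinian. *)
Definition almost_artinian (M : zmodType) (P : (M -> Prop) -> Prop)
    (Md : int -> M -> Prop) (Mtop : M -> Prop) : Prop :=
  exists r : int, artinian_subquot P (lt_part Md r) Mtop.

(* The proof works with descending chains of submodules and the modular law:
   a chain of subgroups S n stabilizes once its meets and its joins with a
   fixed subgroup B do ([stable_meet_join]), or once it is squeezed between B
   and B + C and its traces on C stabilize ([stable_sandwich]).  Write H_{<r}
   for the sum of the components of degree < r and fix r large.  Then
   1. chains of G-submodules between H_{<r} and H_{<r+m} stabilize, peeling
      off one artinian component at a time ([band_stable]);
   2. chains of G-submodules S n containing H_{<r} with X(S n) <= H_{<r}
      stabilize: their meets with H_{<r-d} fall under 1, and their joins with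
      H_{<r-d} lie in H_{<r-d} + ker X ([ker_decomp]), where the hypothesis on
      ker X applies ([X_small_stable]);
   3. for a chain L n of G[X]-submodules containing H_{<r}, the chains
      X^k (L n /\ X^{-k-1} H_{<r}) + H_{<r} fall under 2 and stabilize
      uniformly in k ([stable_uniform]); as X is nilpotent modulo H_{<r}, the
      chain L n stabilizes as well ([GX_chain_stable]). *)

From HB Require Import structures.
From mathcomp Require Import all_boot all_order all_algebra zify.
Import Order.TTheory GRing.Theory Num.Theory.
Local Open Scope ring_scope.
Set Implicit Arguments. Unset Strict Implicit. Unset Printing Implicit Defensive.

Section Chains.
Variable T : Type.
Implicit Types S : nat -> T -> Prop.

Definition descending S := forall n x, S n.+1 x -> S n x.

Definition stable_from S (n0 : nat) :=
  forall n, (n0 <= n)%N -> forall x, S n x <-> S n0 x.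
Definition stable_chain S := exists n0, stable_from S n0.

Lemma descending_le S m n x : descending S -> (m <= n)%N -> S n x -> S m x.
Proof.
move=> S_dec /subnK <-; elim: (n - m)%N x => [|k IH] x //.
by rewrite addSn => /S_dec /IH.
Qed.

Lemma stable_from_le S n0 n1 :
  stable_from S n0 -> (n0 <= n1)%N -> stable_from S n1.
Proof.
move=> S_n0 le01 n le1n x.
have := S_n0 n (leq_trans le01 le1n) x; have := S_n0 n1 le01 x; tauto.
Qed.

Lemma stable_common (F : nat -> nat -> T -> Prop) (J : nat) :
  (forall k, stable_chain (F k)) ->
  exists n0, forall k, (k < J)%N -> stable_from (F k) n0.
Proof.
move=> F_stable; elim: J => [|J [n0 F_n0]]; first by exists 0%N.
have [nJ F_nJ] := F_stable J.
exists (maxn n0 nJ) => k; rewrite ltnS leq_eqVlt => /orP [/eqP ->|ltkJ].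
  exact: stable_from_le F_nJ (leq_maxr _ _).
exact: stable_from_le (F_n0 k ltkJ) (leq_maxl _ _).
Qed.

(* A family A k n, descending in both indices, stabilizes in n uniformly in k
   as soon as each row, each column and the intersection chain (over k)
   stabilize: beyond the index where the column at n1 stabilizes, all rows
   coincide with that intersection, and the finitely many remaining rows are
   handled by [stable_common]. *)
Lemma stable_uniform (A : nat -> nat -> T -> Prop) :
  (forall k, descending (A k)) -> (forall n, descending (fun k => A k n)) ->
  (forall k, stable_chain (A k)) -> (forall n, stable_chain (fun k => A k n)) ->
  stable_chain (fun n x => forall k, A k n x) ->
  exists n0, forall k, stable_from (A k) n0.
Proof.
move=> decn deck stable_row stable_col [n1 C_n1].
have [J A_J] := stable_col n1.
have A_high k n x : (J <= k)%N -> (n1 <= n)%N -> A k n x <-> A J n1 x.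
  move=> leJk le1n; split=> [/(descending_le (decn k) le1n)|AJx].
    by move/(A_J k leJk).
  have C_x : forall k', A k' n1 x.
    move=> k'; have [leJk'|/ltnW ltk'J] := leqP J k'; first exact/(A_J k' leJk').
    exact: descending_le (deck n1) ltk'J AJx.
  exact: (C_n1 n le1n x).2 C_x k.
have [n2 A_low] := stable_common J stable_row.
exists (maxn n1 n2) => k; have [leJk|ltkJ] := leqP J k.
  move=> n le_n x; have := A_high k n x leJk (leq_trans (leq_maxl _ _) le_n).
  by have := A_high k (maxn n1 n2) x leJk (leq_maxl _ _); tauto.
exact: stable_from_le (A_low k ltkJ) (leq_maxr _ _).
Qed.

Lemma descendingI S (B : T -> Prop) :
  descending S -> descending (fun n x => S n x /\ B x).
Proof. by move=> S_dec n x [/S_dec]. Qed.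

End Chains.

Section Subgroups.
Variable V : zmodType.
Implicit Types (S B C : V -> Prop).

Lemma subg0 S : add_subgroup S -> S 0.
Proof. by case. Qed.

Lemma subgB S x y : add_subgroup S -> S x -> S y -> S (x - y).
Proof. by case=> _; apply. Qed.

Lemma subgN S x : add_subgroup S -> S x -> S (- x).
Proof. by move=> S_sub Sx; rewrite -sub0r; apply: subgB (subg0 S_sub) Sx. Qed.

Lemma subgD S x y : add_subgroup S -> S x -> S y -> S (x + y).
Proof. by move=> S_sub Sx Sy; rewrite -[y]opprK; apply: subgB (subgN _ _). Qed.

Lemma subg_sum S (I : eqType) (s : seq I) (F : I -> V) :
  add_subgroup S -> (forall i, i \in s -> S (F i)) -> S (\sum_(i <- s) F i).
Proof.
move=> S_sub S_F; rewrite big_seq; apply: big_ind => //; first exact: subg0.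
by move=> x y; apply: subgD.
Qed.

Definition add_set B C (x : V) := exists b c, [/\ B b, C c & x = b + c].

Lemma add_setC B C x : add_set B C x -> add_set C B x.
Proof. by move=> [b [c [Bb Cc ->]]]; exists c, b; rewrite addrC. Qed.

Lemma add_set_descending (S : nat -> V -> Prop) B :
  descending S -> descending (fun n => add_set (S n) B).
Proof. by move=> S_dec n x [s [b [/S_dec Ss Bb ->]]]; exists s, b. Qed.

(* Modularity, first form: a descending chain of subgroups S n squeezed
   between B and B + C stabilizes as soon as its traces on C do. *)
Lemma stable_sandwich (S : nat -> V -> Prop) B C :
  (forall n, add_subgroup (S n)) -> descending S ->
  (forall n x, B x -> S n x) -> (forall n x, S n x -> add_set B C x) ->
  stable_chain (fun n x => S n x /\ C x) -> stable_chain S.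
Proof.
move=> S_sub S_dec B_S S_BC [n0 SC_n0]; exists n0 => n le0n x.
split=> [|S0x]; first exact: descending_le.
have [b [c [Bb Cc ex]]] := S_BC n0 x S0x.
have S0c : S n0 c by rewrite -[c](addKr b) -ex addrC; apply: subgB (B_S _ _ Bb).
have [Snc _] := (SC_n0 n le0n c).2 (conj S0c Cc).
by rewrite ex; apply: subgD (B_S _ _ Bb) Snc.
Qed.

(* Modularity, second form: a descending chain of subgroups stabilizes as soon
   as both its meets and its joins with a fixed set B ∋ 0 stabilize. *)
Lemma stable_meet_join (S : nat -> V -> Prop) B :
  (forall n, add_subgroup (S n)) -> descending S -> B 0 ->
  stable_chain (fun n x => S n x /\ B x) ->
  stable_chain (fun n => add_set (S n) B) -> stable_chain S.
Proof.
move=> S_sub S_dec B0 [n1 SB_n1] [n2 SjB_n2].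
have SB_stable := stable_from_le SB_n1 (leq_maxl n1 n2).
have SjB_stable := stable_from_le SjB_n2 (leq_maxr n1 n2).
exists (maxn n1 n2) => n le_n x; split=> [|Sx]; first exact: descending_le.
have [s [b [Ss Bb ex]]] : add_set (S n) B x.
  by apply/(SjB_stable n le_n x); exists x, 0; rewrite addr0.
have Smax_b : S (maxn n1 n2) b.
  rewrite -[b](addKr s) -ex addrC; apply: subgB => //.
  exact: descending_le S_dec le_n Ss.
have [Snb _] := (SB_stable n le_n b).2 (conj Smax_b Bb).
by rewrite ex; apply: subgD.
Qed.

End Subgroups.

Section Submodules.
Variables (R : comPzRingType) (M : lmodType R).
Implicit Types (P : R -> Prop) (A B : M -> Prop).


Lemma Gsubmod_subgroup A : Gsubmod A -> add_subgroup A.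
Proof.
case=> A0 AD AZ; split=> // x y Ax Ay.
by apply: AD => //; rewrite -scaleN1r; apply: AZ.
Qed.

Lemma Gsubmod_submod P A : Gsubmod A -> submod P A.
Proof. by case=> A0 AD AZ; split=> // a x _; apply: AZ. Qed.

Lemma submodI P A B : submod P A -> submod P B -> submod P (fun x => A x /\ B x).
Proof.
case=> A0 AD AZ [B0 BD BZ].
by split=> [|x y [? ?] [? ?]|a x Pa [? ?]]; split; auto.
Qed.

Lemma submod_bigI P (F : nat -> M -> Prop) :
  (forall k, submod P (F k)) -> submod P (fun x => forall k, F k x).
Proof.
move=> F_sub; split=> [k|x y Fx Fy k|a x Pa Fx k]; case: (F_sub k); auto.
Qed.

Lemma submod_add_set P A B : submod P A -> submod P B -> submod P (add_set A B).
Proof.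
case=> A0 AD AZ [B0 BD BZ]; split.
- by exists 0, 0; rewrite addr0.
- move=> _ _ [a [b [Aa Bb ->]]] [a' [b' [Aa' Bb' ->]]].
  by exists (a + a'), (b + b'); rewrite addrACA; split; auto.
- move=> c _ Pc [a [b [Aa Bb ->]]].
  by exists (c *: a), (c *: b); rewrite scalerDr; split; auto.
Qed.

Lemma ker_Gsubmod (N : lmodType R) (f : {linear M -> N}) :
  Gsubmod (fun x => f x = 0).
Proof.
split=> [|x y fx fy|a x _ fx]; first exact: linear0.
  by rewrite linearD fx fy addr0.
by rewrite linearZ /= fx scaler0.
Qed.

End Submodules.

Section Graded.
Variables (G : comPzRingType) (Gd : int -> G -> Prop).
Variables (H : lmodType G) (Hd : int -> H -> Prop).
Hypothesis G_graded : graded_ring Gd.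
Hypothesis G_nonpos : forall i : int, 0 < i -> forall a, Gd i a -> a = 0.
Hypothesis H_graded : graded_module Gd Hd.
Implicit Types P Q : pred int.

Lemma Hd_subgroup i : add_subgroup (Hd i).
Proof. by case: H_graded. Qed.

Lemma HdZ i j a x : Gd i a -> Hd j x -> Hd (i + j) (a *: x).
Proof. by case: H_graded => _ HdZ _; apply: HdZ. Qed.

Lemma Hd_submod0 j : submod (Gd 0) (Hd j).
Proof.
split=> [|x y|a x Ga Hx]; [exact: subg0 (Hd_subgroup j)|exact: subgD (Hd_subgroup j)|].
by rewrite -[j]add0r; apply: HdZ.
Qed.

(* [homsum P x]: x is a finite sum of homogeneous elements whose degrees
   satisfy P. For P = (< r) this is H_{<r} (lemma [lt_part_homsum]). *)
Definition homsum (P : pred int) (x : H) := exists l : seq (int * H),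
  (forall p, p \in l -> P p.1 /\ Hd p.1 p.2) /\ x = \sum_(p <- l) p.2.

Lemma homsum_subgroup P : add_subgroup (homsum P).
Proof.
split; first by exists [::]; rewrite big_nil.
move=> _ _ [l1 [l1_hom ->]] [l2 [l2_hom ->]].
exists (l1 ++ [seq (p.1, - p.2) | p <- l2]); rewrite big_cat big_map sumrN.
split=> // p; rewrite mem_cat => /orP [/l1_hom //|/mapP [q /l2_hom [Pq Hq] ->]].
by split=> //; apply: subgN (Hd_subgroup _) Hq.
Qed.

Lemma homsum_hom P i v : P i -> Hd i v -> homsum P v.
Proof.
by move=> Pi Hv; exists [:: (i, v)]; rewrite big_seq1; split=> // p /[1!inE] /eqP ->.
Qed.

Lemma homsum_mono P Q x : (forall i, P i -> Q i) -> homsum P x -> homsum Q x.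
Proof.
by move=> PQ [l [l_hom ->]]; exists l; split=> // p /l_hom [/PQ].
Qed.

Lemma homsum_uniq P x : homsum P x -> exists (t : seq int) (f : int -> H),
  [/\ uniq t, all P t, (forall i, Hd i (f i)) & x = \sum_(i <- t) f i].
Proof.
move=> [l [l_hom ->]]; elim: l l_hom => [|[a v] l IH] l_hom.
  by exists [::], (fun _ => 0); rewrite !big_nil; split=> // i; apply: subg0 (Hd_subgroup i).
have [|t [f [ut Pt Hf sum_l]]] := IH; first by move=> p lp; apply: l_hom; rewrite inE lp orbT.
have [Pa Hv] : P a /\ Hd a v by apply: (l_hom (a, v)); rewrite inE eqxx.
rewrite big_cons sum_l /=; have [at_|na] := boolP (a \in t).
- exists t, (fun i => if i == a then v + f a else f i); split=> //.
    by move=> i; case: eqP => [->|_] //; apply: subgD (Hd_subgroup a) Hv (Hf a).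
  rewrite (bigD1_seq a at_ ut) [RHS](bigD1_seq a at_ ut) /= eqxx addrA.
  by congr (_ + _); apply: eq_bigr => i /negPf ->.
- exists (a :: t), (fun i => if i == a then v else f i); split.
  + by rewrite /= na.
  + by rewrite /= Pa.
  + by move=> i; case: eqP => [->|].
  rewrite big_cons eqxx; congr (_ + _); rewrite big_seq [RHS]big_seq.
  by apply: eq_bigr => i ti; case: eqP ti => // ->; rewrite (negPf na).
Qed.

Lemma lt_part_homsum r x : lt_part Hd r x <-> homsum (fun i => i < r) x.
Proof.
split=> [[s [f [s_lt Hf ->]]]|/homsum_uniq [t [f [_ t_lt Hf ->]]]]; last by exists t, f.
exists [seq (i, f i) | i <- s]; rewrite big_map; split=> // p /mapP [i si ->].
by split=> //=; apply: (allP s_lt).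
Qed.

(* Since G has no components of positive degree, H_{<j} is a G-submodule. *)
Lemma homsumZ j a x :
  homsum (fun i => i < j) x -> homsum (fun i => i < j) (a *: x).
Proof.
move=> [l [l_hom ->]]; rewrite scaler_sumr.
apply: subg_sum (homsum_subgroup _) _ => p /l_hom [p_lt Hp].
case: G_graded => _ _ [/(_ a) [s [g [_ Gg ->]]] _].
rewrite scaler_suml; apply: subg_sum (homsum_subgroup _) _ => t _.
have [t_pos|t_nonpos] := ltrP 0 t.
  by rewrite (G_nonpos t_pos (Gg t)) scale0r; apply: subg0 (homsum_subgroup _).
apply: (homsum_hom (i := t + p.1)); last exact: HdZ.
by rewrite -[j]add0r; apply: ler_ltD.
Qed.

Lemma homsum_Gsubmod j : Gsubmod (homsum (fun i => i < j)).
Proof.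
split=> [|x y|a x _]; [exact: subg0 (homsum_subgroup _)|exact: subgD (homsum_subgroup _)|].
exact: homsumZ.
Qed.

Lemma homsum_top j x :
  homsum (fun i => i < j + 1) x -> add_set (homsum (fun i => i < j)) (Hd j) x.
Proof.
move=> [l [l_hom ->]].
exists (\sum_(p <- l | p.1 != j) p.2), (\sum_(p <- l | p.1 == j) p.2); split.
- exists [seq p <- l | p.1 != j]; rewrite big_filter; split=> // p.
  rewrite mem_filter => /andP [pj /l_hom [p_lt Hp]]; split=> //.
  by rewrite lt_neqAle pj -ltzD1.
- rewrite -big_filter; apply: subg_sum (Hd_subgroup j) _ => p.
  by rewrite mem_filter => /andP [/eqP <-] /l_hom [].
- by rewrite (bigID (fun p : int * H => p.1 != j)) /=; congr (_ + _); apply: eq_bigl => p; rewrite negbK.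
Qed.

Lemma homsum_bound x : exists j, homsum (fun i => i < j) x.
Proof.
case: H_graded => _ _ [/(_ x) [s [f [_ Hf ->]]] _].
suff [j s_lt] : exists j : int, forall i, i \in s -> i < j.
  by exists j; apply: subg_sum (homsum_subgroup _) _ => i /s_lt i_lt; apply: homsum_hom (Hf i).
elim: s {Hf} => [|a s [j s_lt]]; first by exists 0.
exists (Order.max (a + 1) j) => i; rewrite inE lt_max => /orP [/eqP ->|/s_lt ->].
  by rewrite ltzD1 lexx.
by rewrite orbT.
Qed.

Lemma high_components_vanish r (s : seq int) (h : int -> H) :
  uniq s -> (forall i, Hd i (h i)) -> (forall i, i \in s -> r <= i) ->
  homsum (fun i => i < r) (\sum_(i <- s) h i) -> forall i, i \in s -> h i = 0.
Proof.
move=> us Hh s_ge /homsum_uniq [t [g [ut t_lt Hg sum_eq]]].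
pose F j := if r <= j then h j else - g j.
have F0 : forall j, j \in s ++ t -> F j = 0.
  case: H_graded => _ _ [_ direct]; apply: direct.
  - rewrite cat_uniq us ut andbT /=; apply/hasPn => j /(allP t_lt) j_lt.
    by apply/negP => /s_ge; rewrite leNgt j_lt.
  - by move=> j; rewrite /F; case: ifP => _ //; apply: subgN (Hd_subgroup j) (Hg j).
  rewrite big_cat /=.
  have -> : \sum_(j <- s) F j = \sum_(j <- s) h j.
    by rewrite big_seq [RHS]big_seq; apply: eq_bigr => j /s_ge; rewrite /F => ->.
  have -> : \sum_(j <- t) F j = - \sum_(j <- t) g j.
    rewrite -sumrN big_seq [RHS]big_seq; apply: eq_bigr => j /(allP t_lt) j_lt.
    by rewrite /F leNgt j_lt.
  by rewrite sum_eq subrr.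
by move=> i si; move: (F0 i); rewrite mem_cat si /F (s_ge i si); apply.
Qed.

Section Operator.
Variables (X : {linear H -> H}) (d : int).
Hypothesis X_deg : forall i x, Hd i x -> Hd (i + d) (X x).

Lemma homsum_X j x :
  homsum (fun i => i < j) x -> homsum (fun i => i < j + d) (X x).
Proof.
move=> [l [l_hom ->]]; rewrite raddf_sum.
apply: subg_sum (homsum_subgroup _) _ => p /l_hom [p_lt Hp].
by apply: (homsum_hom (i := p.1 + d)); [rewrite ltrD2r | apply: X_deg].
Qed.

(* If X y lies in H_{<r}, then y is a kernel element plus an element of
   H_{<r-d}: the components of y of degree >= r - d are mapped by X to
   distinct degrees >= r, so they must be killed by X. *)
Lemma ker_decomp r y : homsum (fun i => i < r) (X y) ->
  add_set (fun k => X k = 0) (homsum (fun i => i < r - d)) y.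
Proof.
move=> Xy_lt; case: H_graded => _ _ [/(_ y) [s [f [us Hf y_eq]]] _].
pose k := \sum_(i <- s | r - d <= i) f i.
pose b := \sum_(i <- s | i < r - d) f i.
have y_kb : y = k + b.
  rewrite y_eq (bigID (fun i => r - d <= i)) /=; congr (_ + _).
  by apply: eq_bigl => i; rewrite -ltNge.
have b_lt : homsum (fun i => i < r - d) b.
  rewrite /b -big_filter; apply: subg_sum (homsum_subgroup _) _ => i.
  by rewrite mem_filter => /andP [i_lt _]; apply: homsum_hom (Hf i).
exists k, b; split=> //.
pose s' := [seq i + d | i <- s & r - d <= i].
have Xk_eq : X k = \sum_(j <- s') X (f (j - d)).
  by rewrite /k -big_filter raddf_sum big_map; apply: eq_bigr => i _; rewrite addrK.
have Xk_lt : homsum (fun i => i < r) (X k).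
  have -> : X k = X y - X b by rewrite y_kb linearD addrK.
  apply: subgB (homsum_subgroup _) Xy_lt _.
  by rewrite -[r](subrK d); apply: homsum_X.
have vanish := high_components_vanish (r := r) (s := s') (h := fun j => X (f (j - d))).
rewrite Xk_eq big_seq big1 // => j s'j; apply: vanish => //.
- by rewrite map_inj_uniq ?filter_uniq //; apply: addIr.
- by move=> i; rewrite -{1}[i](subrK d); apply: X_deg.
- move=> i /mapP [i' i'_in ->]; move: i'_in; rewrite mem_filter => /andP [i'_ge _].
  by rewrite -lerBlDr.
- by rewrite -Xk_eq.
Qed.

Lemma lt_part_kernel r x : lt_part (fun i x => Hd i x /\ X x = 0) r x ->
  X x = 0 /\ homsum (fun i => i < r) x.
Proof.
move=> [s [f [s_lt Kf ->]]]; split.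
  by rewrite raddf_sum big1 // => i _; case: (Kf i).
apply: subg_sum (homsum_subgroup _) _ => i si.
by apply: (homsum_hom (i := i)); [apply: (allP s_lt) | case: (Kf i)].
Qed.

Lemma iterD k x y : iter k X (x + y) = iter k X x + iter k X y.
Proof. by elim: k => //= k ->; rewrite linearD. Qed.

Lemma iterZ k a x : iter k X (a *: x) = a *: iter k X x.
Proof. by elim: k => //= k ->; rewrite linearZ. Qed.

Lemma iterB k x y : iter k X (x - y) = iter k X x - iter k X y.
Proof. by rewrite iterD -scaleN1r iterZ scaleN1r. Qed.

Lemma iter0 k : iter k X 0 = 0.
Proof. by elim: k => //= k ->; rewrite linear0. Qed.

Hypothesis d_neg : d < 0.

(* X is nilpotent modulo H_{<r}, since it strictly lowers degrees. *)
Lemma iter_X_low r x : exists k, homsum (fun i => i < r) (iter k X x).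
Proof.
suff low_from (u : nat) y : homsum (fun i => i < r + u%:Z) y ->
    exists k, homsum (fun i => i < r) (iter k X y).
  have [j x_lt] := homsum_bound x; apply: (low_from `|j - r|%N).
  apply: homsum_mono x_lt => i i_lt; apply: (lt_le_trans i_lt).
  by rewrite -lerBlDl abszE ler_norm.
elim: u y => [|u IH] y y_lt; first by exists 0%N; rewrite addr0 in y_lt.
have [|k low] := IH (X y); last by exists k.+1; rewrite iterSr.
apply: homsum_mono (homsum_X y_lt) => i i_lt; apply: (lt_le_trans i_lt).
by move: d_neg; rewrite intS; lia.
Qed.

End Operator.

Section Stability.
Variable r : int.
Hypothesis Hd_artinian : forall i, r <= i ->
  artinian_subquot (submod (Gd 0)) (fun x => x = 0) (Hd i).

(* By induction on m, splitting off the top degree j = r + m: the meets with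
   H_{<j} stabilize by induction, and the joins S n + H_{<j}, which lie between
   H_{<j} and H_{<j} + H_j, stabilize because H_j is an artinian G_0-module. *)
Lemma band_stable (m : nat) (S : nat -> H -> Prop) :
  (forall n, Gsubmod (S n)) -> descending S ->
  (forall n x, homsum (fun i => i < r) x -> S n x) ->
  (forall n x, S n x -> homsum (fun i => i < r + m%:Z) x) -> stable_chain S.
Proof.
elim: m S => [|m IH] S S_sub S_dec S_ge S_lt.
  by exists 0%N => n _ x; split=> [/S_lt|/(S_lt 0%N)]; rewrite addr0; apply: S_ge.
pose j := r + m%:Z.
have low_j := homsum_Gsubmod j.
apply: (stable_meet_join (B := homsum (fun i => i < j))) => //.
- by move=> n; apply: Gsubmod_subgroup.
- exact: subg0 (homsum_subgroup _).
- apply: IH; [by move=> n; apply: submodI (S_sub n) low_j | exact: descendingI | | by move=> n x []].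
  move=> n x x_lt; split; first exact: S_ge.
  by apply: homsum_mono x_lt => i i_lt; apply: (lt_le_trans i_lt); rewrite lerDl.
have join_sub n : Gsubmod (add_set (S n) (homsum (fun i => i < j))).
  exact: submod_add_set (S_sub n) low_j.
apply: (stable_sandwich (B := homsum (fun i => i < j)) (C := Hd j)).
- by move=> n; apply: Gsubmod_subgroup (join_sub n).
- exact: add_set_descending.
- move=> n x x_lt; exists 0, x; rewrite add0r; split=> //.
  exact: subg0 (Gsubmod_subgroup (S_sub n)).
- move=> n _ [s [b [Ss b_lt ->]]].
  have [h [v [h_lt Hv ->]]] : add_set (homsum (fun i => i < j)) (Hd j) s.
    apply: homsum_top; have -> : j + 1 = r + m.+1%:Z by rewrite /j; lia.
    exact: S_lt Ss.
  exists (h + b), v; rewrite addrAC; split=> //; exact: subgD (homsum_subgroup _) h_lt b_lt.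
- have trace_sub n := submodI (Gsubmod_submod (Gd 0) (join_sub n)) (Hd_submod0 j).
  apply: (Hd_artinian (i := j)); first by rewrite lerDl.
  + move=> n; have [trace0 _ _] := trace_sub n.
    by split=> [|x ->|x []] //; apply: trace_sub.
  + by apply: descendingI; apply: add_set_descending.
Qed.

Section Kernel.
Variables (X : {linear H -> H}) (d r0 : int).
Hypothesis X_deg : forall i x, Hd i x -> Hd (i + d) (X x).
Hypothesis d_neg : d < 0.
Hypothesis r0_le : r0 <= r - d.
Hypothesis ker_artinian : artinian_subquot (@Gsubmod G H)
  (lt_part (fun i x => Hd i x /\ X x = 0) r0) (fun x => X x = 0).

Definition X_small (S : H -> Prop) := [/\ Gsubmod S,
  forall x, homsum (fun i => i < r) x -> S x
  & forall x, S x -> homsum (fun i => i < r) (X x)].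

(* With B = H_{<r-d}: the
   meets with B stabilize by [band_stable]; the joins S n + B lie between B and
   B + ker X by [ker_decomp], and their traces on ker X stabilize because
   ker X is almost artinian, with H_{<r0} <= B. *)
Lemma X_small_stable (S : nat -> H -> Prop) :
  (forall n, X_small (S n)) -> descending S -> stable_chain S.
Proof.
move=> S_small S_dec.
have S_sub n : Gsubmod (S n) by case: (S_small n).
pose B := homsum (fun i => i < r - d).
have B_sub : Gsubmod B := homsum_Gsubmod _.
have r_le : r <= r - d by rewrite lerDl oppr_ge0 ltW.
apply: (stable_meet_join (B := B)) => //.
- by move=> n; apply: Gsubmod_subgroup.
- exact: subg0 (homsum_subgroup _).
- apply: (band_stable (m := `|d|%N)); [by move=> n; apply: submodI (S_sub n) B_sub|
    exact: descendingI| |].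
  + move=> n x x_lt; case: (S_small n) => _ S_ge _; split; first exact: S_ge.
    by apply: homsum_mono x_lt => i i_lt; apply: lt_le_trans i_lt r_le.
  + by move=> n x [_]; rewrite /B abszE ltr0_norm.
have join_sub n : Gsubmod (add_set (S n) B) by exact: submod_add_set (S_sub n) B_sub.
apply: (stable_sandwich (B := B) (C := fun x => X x = 0)).
- by move=> n; apply: Gsubmod_subgroup (join_sub n).
- exact: add_set_descending.
- move=> n x Bx; exists 0, x; rewrite add0r; split=> //.
  exact: subg0 (Gsubmod_subgroup (S_sub n)).
- move=> n _ [s [b [Ss Bb ->]]]; apply: add_setC; apply: (ker_decomp X_deg).
  rewrite linearD; apply: subgD (homsum_subgroup _) _ _.
  + by case: (S_small n) => _ _; apply.
  + by rewrite -[r](subrK d); apply: homsum_X.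
- apply: ker_artinian; last by apply: descendingI; apply: add_set_descending.
  move=> n; split; last by move=> x [].
  + exact: submodI (join_sub n) (ker_Gsubmod X).
  + move=> x /lt_part_kernel [X0 x_lt]; split=> //; exists 0, x; rewrite add0r.
    split=> //; first exact: subg0 (Gsubmod_subgroup (S_sub n)).
    by apply: homsum_mono x_lt => i i_lt; apply: lt_le_trans i_lt r0_le.
Qed.

Definition image_mod (L : H -> Prop) (k : nat) (y : H) := exists x,
  [/\ L x, homsum (fun i => i < r) (iter k.+1 X x)
    & homsum (fun i => i < r) (y - iter k X x)].

Lemma image_mod_small L k : Gsubmod L -> X_small (image_mod L k).
Proof.
case=> L0 LD LZ; have low := homsum_subgroup (fun i => i < r); split.
- split.
  + by exists 0; rewrite !iter0 subr0; split=> //; apply: subg0 low.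
  + move=> y1 y2 [x1 [Lx1 low1 diff1]] [x2 [Lx2 low2 diff2]].
    exists (x1 + x2); rewrite !iterD opprD addrACA.
    by split; [apply: LD | apply: subgD low low1 low2 | apply: subgD low diff1 diff2].
  + move=> a y _ [x [Lx low_x diff]]; exists (a *: x); rewrite !iterZ -scalerBr.
    by split; [apply: LZ | apply: homsumZ | apply: homsumZ].
- by move=> y y_low; exists 0; rewrite !iter0 subr0; split=> //; apply: subg0 low.
- move=> y [x [Lx low_x diff]].
  have -> : X y = X (y - iter k X x) + iter k.+1 X x by rewrite linearB /= subrK.
  apply: subgD low _ low_x; apply: homsum_mono (homsum_X X_deg diff) => i i_lt.
  by apply: lt_trans i_lt _; rewrite gtrDl.
Qed.

Lemma image_mod_succ L k y :
  (forall x, L x -> L (X x)) -> image_mod L k.+1 y -> image_mod L k y.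
Proof. by move=> LX [x [Lx low_x diff]]; exists (X x); rewrite -!iterSr; split=> //; apply: LX. Qed.

(* The chains A k = image_mod (L _) k are X-small, hence stabilize
   uniformly in k by [stable_uniform]; an element of L n0 is then shown to lie
   in L m by induction on its nilpotency order modulo H_{<r}. *)
Lemma GX_chain_stable (L : nat -> H -> Prop) :
  (forall n, GXsubmod X (L n)) -> descending L ->
  (forall n x, homsum (fun i => i < r) x -> L n x) -> stable_chain L.
Proof.
move=> L_sub L_dec L_ge.
pose A k n := image_mod (L n) k.
have A_small k n : X_small (A k n) by apply: image_mod_small; case: (L_sub n).
have A_dec k : descending (A k) by move=> n y [x [/L_dec Lx low_x diff]]; exists x.
have A_succ n : descending (fun k => A k n).
  by move=> k y; apply: image_mod_succ; case: (L_sub n).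
have [n0 A_stable] : exists n0, forall k, stable_from (A k) n0.
  apply: stable_uniform => // [k|n|]; apply: X_small_stable => //.
  - move=> n; split.
    + by apply: submod_bigI => k; case: (A_small k n).
    + by move=> x x_low k; case: (A_small k n) => _ A_ge _; apply: A_ge.
    + by move=> x /(_ 0%N); case: (A_small 0%N n) => _ _; apply.
  - by move=> n x A_x k; apply: A_dec.
exists n0 => m le0m x; split=> [|L0x]; first exact: descending_le.
have [k low_x] := iter_X_low X_deg d_neg r x.
elim: k x L0x low_x => [|k IH] x L0x low_x; first exact: L_ge.
have [x' [Lmx' _ diff]] : A k m (iter k X x).
  apply/(A_stable k m le0m); exists x; rewrite subrr; split=> //.
  exact: subg0 (homsum_subgroup _).
have Lm_diff : L m (x - x').
  apply: IH; last by rewrite iterB.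
  apply: subgB (Gsubmod_subgroup (L_sub n0).1) L0x _.
  exact: descending_le L_dec le0m Lmx'.
by rewrite -(subrK x' x); apply: subgD (Gsubmod_subgroup (L_sub m).1) Lm_diff Lmx'.
Qed.

End Kernel.
End Stability.
End Graded.

Theorem lemmaA3 (G : comPzRingType) (Gd : int -> G -> Prop)
    (H : lmodType G) (Hd : int -> H -> Prop)
    (X : {linear H -> H}) (d : int) :
  graded_ring Gd ->
  (forall i : int, 0 < i -> forall a, Gd i a -> a = 0) ->
  graded_module Gd Hd ->
  (exists N : int, forall i : int, N <= i ->
     artinian_subquot (submod (Gd 0)) (fun x => x = 0) (Hd i)) ->
  d < 0 ->
  (forall (i : int) (x : H), Hd i x -> Hd (i + d) (X x)) ->
  almost_artinian (@Gsubmod G H) (fun i x => Hd i x /\ X x = 0)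
                  (fun x => X x = 0) ->
  almost_artinian (GXsubmod X) Hd (fun _ => True).
Proof.
move=> G_graded G_nonpos H_graded [N H_artinian] d_neg X_deg [r0 ker_artinian].
pose r := Order.max N r0.
have N_le : N <= r by rewrite le_max lexx.
have r0_le : r0 <= r - d.
  by apply: (@le_trans _ _ r); [rewrite le_max lexx orbT | rewrite lerDl oppr_ge0 ltW].
exists r => L L_chain L_dec.
have Hd_artinian i : r <= i -> artinian_subquot (submod (Gd 0)) (fun x => x = 0) (Hd i).
  by move=> le_ri; apply: H_artinian (le_trans N_le le_ri).
apply: (GX_chain_stable G_graded G_nonpos H_graded Hd_artinian X_deg d_neg r0_le ker_artinian).
- by move=> n; case: (L_chain n).
- exact: L_dec.
- by move=> n x /(lt_part_homsum H_graded) x_lt; case: (L_chain n) => _ L_ge _; apply: L_ge.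
Qed.
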